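(* Let $C'\subseteq C\subseteq\mathbb{R}^n$ be nonempty polyhedra. Then for every lazy expression $E$, $\mathrm{LB}(E,C')\ge\mathrm{LB}(E,C)$ and $\mathrm{UB}(E,C')\le\mathrm{UB}(E,C)$.
   Context: Lazy (scalar) expressions are generated by $E::=\mathtt{Affine}(w,b)\mid\mathtt{Sum}(\{E_1,\dots,E_k\})\mid\mathtt{Max}(\{E_1,\dots,E_k\})\mid\mathtt{Scale}(c,E)\mid\mathtt{Bias}(b,E)$ ($w\in\mathbb{R}^n$, $b,c\in\mathbb{R}$). A polyhedron is a finite intersection of closed halfspaces. The bounds (values in $\mathbb{R}\cup\{\pm\infty\}$, with $0\cdot(\pm\infty)=0$) are defined recursively: $\mathrm{LB}(\mathtt{Affine}(w,b),C)=\inf_{x\in C}(w^\top x+b)$, $\mathrm{UB}(\mathtt{Affine}(w,b),C)=\sup_{x\in C}(w^\top x+b)$; $\mathrm{LB}/\mathrm{UB}$ of $\mathtt{Sum}$ are the sums of the children's $\mathrm{LB}$/$\mathrm{UB}$; $\mathrm{LB}(\mathtt{Scale}(c,E),C)=c\,\mathrm{LB}(E,C)$ if $c\ge0$ and $c\,\mathrm{UB}(E,C)$ if $c<0$, $\mathrm{UB}(\mathtt{Scale}(c,E),C)=c\,\mathrm{UB}(E,C)$ if $c\ge0$ and $c\,\mathrm{LB}(E,C)$ if $c<0$; $\mathrm{LB}/\mathrm{UB}(\mathtt{Bias}(b,E),C)=\mathrm{LB}/\mathrm{UB}(E,C)+b$; $\mathrm{LB}(\mathtt{Max}(\{E_i\}),C)=\max_i\mathrm{LB}(E_i,C)$,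 $\mathrm{UB}(\mathtt{Max}(\{E_i\}),C)=\max_i\mathrm{UB}(E_i,C)$. *)

From HB Require Import structures.
From mathcomp Require Import all_boot all_order all_algebra.
From mathcomp Require Import all_classical all_reals.
From mathcomp Require Import ereal.

Set Implicit Arguments.
Unset Strict Implicit.
Unset Printing Implicit Defensive.

Import Order.TTheory GRing.Theory Num.Theory.
Local Open Scope classical_set_scope.
Local Open Scope ring_scope.

Definition dotv (R : realType) (n : nat) (w x : 'rV[R]_n) : R :=
  \sum_(i < n) w 0 i * x 0 i.

Definition polyhedron (R : realType) (n : nat) (C : set 'rV[R]_n) : Prop :=
  exists hs : seq ('rV[R]_n * R),
    C = [set x | forall h, h \in hs -> dotv h.1 x <= h.2].

(* Lazy (scalar) expressions.  Sum and Max take finite families of children;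
   Max takes a nonempty family (first child plus a list of further children). *)
Inductive lexpr (R : realType) (n : nat) : Type :=
| Affine of 'rV[R]_n & R
| Sum of seq (lexpr R n)
| Max of lexpr R n & seq (lexpr R n)
| Scale of R & lexpr R n
| Bias of R & lexpr R n.

Local Open Scope ereal_scope.

(* bounds E C = (LB(E,C), UB(E,C)) in \bar R, defined recursively as in the paper.
   In \bar R, 0 * (+-oo) = 0, matching the paper's convention. *)
Fixpoint bounds (R : realType) (n : nat) (C : set 'rV[R]_n) (e : lexpr R n)
  : \bar R * \bar R :=
  match e with
  | Affine w b =>
      (ereal_inf [set ((dotv w x + b)%R)%:E | x in C],
       ereal_sup [set ((dotv w x + b)%R)%:E | x in C])
  | Sum es =>
      (\sum_(p <- map (bounds C) es) p.1, \sum_(p <- map (bounds C) es) p.2)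
  | Max e0 es =>
      (\big[maxe/-oo]_(p <- map (bounds C) (e0 :: es)) p.1,
       \big[maxe/-oo]_(p <- map (bounds C) (e0 :: es)) p.2)
  | Scale c e1 =>
      let p := bounds C e1 in
      if (0 <= c)%R then (c%:E * p.1, c%:E * p.2) else (c%:E * p.2, c%:E * p.1)
  | Bias b e1 =>
      let p := bounds C e1 in (p.1 + b%:E, p.2 + b%:E)
  end.

Definition LB (R : realType) (n : nat) (e : lexpr R n) (C : set 'rV[R]_n) : \bar R :=
  (bounds C e).1.
Definition UB (R : realType) (n : nat) (e : lexpr R n) (C : set 'rV[R]_n) : \bar R :=
  (bounds C e).2.

From HB Require Import structures.
From mathcomp Require Import all_boot all_order all_algebra.
From mathcomp Require Import all_classical all_reals.
From mathcomp Require Import ereal.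
From Stdlib Require List.
Import Order.TTheory GRing.Theory Num.Theory.
Local Open Scope classical_set_scope.
Local Open Scope ereal_scope.

(* Shrinking C raises the infimum and lowers the supremum of an affine
   function over it.  Every other constructor combines the children's bounds
   by operations that are monotone in each argument (sum, max, bias, scaling
   by c >= 0), or antitone for scaling by c < 0, which is exactly why LB and
   UB are swapped there; so the claim follows by structural induction on E. *)

Lemma lexpr_nested_ind (R : realType) (n : nat) (P : lexpr R n -> Prop) :
  (forall w b, P (Affine w b)) ->
  (forall es, List.Forall P es -> P (Sum es)) ->
  (forall e0 es, List.Forall P (e0 :: es) -> P (Max e0 es)) ->
  (forall c e, P e -> P (Scale c e)) ->
  (forall b e, P e -> P (Bias b e)) ->
  forall e, P e.
Proof.
(* The recursion over the child lists is done inside each case, so that the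
   guard checker sees IH applied only to subterms of e. *)
move=> PA PS PM PSc PB; fix IH 1.
case=> [w b|es|e0 es|c e|b e].
- exact: PA.
- apply: PS; elim: es => [|e es IHes]; constructor => //; exact: IH.
- apply/PM/List.Forall_cons; first exact: IH.
  elim: es => [|e es IHes]; constructor => //; exact: IH.
- exact/PSc/IH.
- exact/PB/IH.
Qed.

Lemma le_big_Forall d (T : porderType d) (op : T -> T -> T) (idx : T)
    (I : Type) (s : seq I) (F G : I -> T) :
  (forall x x' y y', (x <= x')%O -> (y <= y')%O -> (op x y <= op x' y')%O) ->
  List.Forall (fun i => F i <= G i)%O s ->
  (\big[op/idx]_(i <- s) F i <= \big[op/idx]_(i <- s) G i)%O.
Proof.
move=> op_mono; elim=> [|i s' FGi _ IH]; first by rewrite !big_nil.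
by rewrite !big_cons; apply: op_mono.
Qed.

Lemma lee_wnmul2l (R : realDomainType) (x : \bar R) :
  x <= 0 -> {homo *%E x : y z / y <= z >-> z <= y}.
Proof.
move=> x_le0 y z yz; rewrite -(oppeK x) (mulNe (- x) y) (mulNe (- x) z) leeN2.
by apply: lee_wpmul2l yz; rewrite oppe_ge0.
Qed.

Lemma LB_UB_subset (R : realType) (n : nat) (C' C : set 'rV[R]_n) :
  C' `<=` C -> forall e : lexpr R n, LB e C <= LB e C' /\ UB e C' <= UB e C.
Proof.
move=> C'C e; rewrite /LB /UB.
elim/lexpr_nested_ind: e => [w b|es|e0 es|c e|b e] /=.
- by split; [apply: ereal_inf_le_tmp | apply: ereal_sup_le];
    apply: image_subset.
- move=> /List.Forall_and_inv[IH1 IH2]; rewrite !big_map.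
  by split; [apply: le_big_Forall _ IH1 | apply: le_big_Forall _ IH2];
    move=> *; apply: leeD.
- move=> /List.Forall_and_inv[IH1 IH2]; rewrite -!map_cons !big_map.
  by split; [apply: le_big_Forall _ IH1 | apply: le_big_Forall _ IH2];
    move=> *; apply: le_max2.
- move=> [IH1 IH2]; case: ifP => c_ge0 /=.
    by split; apply: lee_wpmul2l; rewrite ?lee_fin.
  have c_le0 : (c <= 0)%R by apply/ltW; rewrite ltNge c_ge0.
  by split; apply: lee_wnmul2l; rewrite ?lee_fin.
- by move=> [IH1 IH2]; split; apply: leeD2r.
Qed.

Theorem mainTheorem7 (R : realType) (n : nat) (C' C : set 'rV[R]_n) :
  polyhedron C' -> polyhedron C -> C' !=set0 -> C !=set0 -> C' `<=` C ->
  forall E : lexpr R n, LB E C <= LB E C' /\ UB E C' <= UB E C.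
Proof. by move=> _ _ _ _; apply: LB_UB_subset. Qed.
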